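(* Let $E: y^2=x^3+Ax+B$ ($A,B\in\mathbb{Z}$) be an elliptic curve over $\mathbb{Q}$. There exist constants $c_1,c_2$ depending only on $E$ such that for every squarefree positive integer $D$ and every point $P\ne O$ of $E_D(\mathbb{Q})$, where $E_D: y^2=x^3+D^2Ax+D^3B$, \[c_1-\log D\le \hat h(P)-h(P)\le c_2+\log D,\] and if in addition $x(P)>D$, then \[c_1-\log D\le \hat h(P)-h(P)\le c_2.\]
   Context: $h$ is the absolute logarithmic Weil height on $\overline{\mathbb{Q}}$; for a point $P$ on an elliptic curve in Weierstrass form, $h(P)=h(x(P))$ and $\hat h(P)=\lim_{n\to\infty} h(2^nP)/4^n$ (the canonical height, not normalized by the factor $1/2$). *)

From Stdlib Require Import Reals QArith ZArith.
From Coquelicot Require Import Coquelicot.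
Open Scope R_scope.

Definition heightQ (q : Q) : R :=
  let r := Qred q in
  ln (Rmax (IZR (Z.abs (Qnum r))) (IZR (Zpos (Qden r)))).

(* Points of a Weierstrass curve y^2 = x^3 + a x + b over Q:
   None is the point at infinity O, Some (x,y) an affine point. *)
Definition pt := option (Q * Q).

Definition on_curve (a b : Q) (P : pt) : Prop :=
  match P with
  | None => True
  | Some (x, y) => (y * y == x * x * x + a * x + b)%Q
  end.

Definition dbl (a : Q) (P : pt) : pt :=
  match P with
  | None => None
  | Some (x, y) =>
      if Qeq_bool y 0 then None
      else
        let l := (((3 # 1) * x * x + a) / ((2 # 1) * y))%Q in
        let x' := (l * l - (2 # 1) * x)%Q in
        Some (x', (l * (x - x') - y)%Q)
  end.

Definition hpt (P : pt) : R :=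
  match P with
  | None => 0
  | Some (x, _) => heightQ x
  end.

(* Canonical height (not normalized by 1/2): lim h(2^n P) / 4^n. *)
Definition canon_height (a : Q) (P : pt) : R :=
  real (Lim_seq (fun n => hpt (Nat.iter n (dbl a) P) / 4 ^ n)).

Definition squarefree (d : Z) : Prop :=
  forall k : Z, (k * k | d)%Z -> Z.abs k = 1%Z.

Definition x_coord_gt (P : pt) (d : Z) : Prop :=
  match P with
  | None => False
  | Some (x, _) => (inject_Z d < x)%Q
  end.

From Stdlib Require Import Reals QArith Qcanon ZArith Qreals Znumtheory Zpow_facts List Lia Lra.
From Coquelicot Require Import Coquelicot.
Import ListNotations.
Open Scope R_scope.

(* Write x(P)/D = m/n in lowest terms. Since (x, y) |-> (x/D, y/D^(3/2)) maps E_D onto E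
   over Q(sqrt D), doubling P acts on m/n by the duplication map of E itself:
   x(2P)/D = F(m,n)/G(m,n) with binary quartics F, G depending only on A, B. As F and G
   have Bezout cofactors giving Delta n^7 and Delta m^7, gcd(F(m,n), G(m,n)) divides
   Delta and max(|F|,|G|) is comparable to max(|m|,|n|)^4, so g(P) := h(x(P)/D)
   satisfies |g(2P) - 4 g(P)| <= C with C independent of D (when 2P = O, m/n is an
   integral root of x^3 + A x + B, hence bounded). Tate's telescoping argument
   then gives |hhat(P) - g(P)| <= C/3. Finally, multiplying a reduced fraction by D
   changes its height by at most log D, and does not decrease it when x(P) > D. *)

Lemma is_lim_seq_bounded_div_pow (u : nat -> R) (K q : R) :
  1 < q -> (forall n, Rabs (u n) <= K) -> is_lim_seq (fun n => u n / q ^ n) 0.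
Proof.
  intros Hq Hu.
  assert (Hgeom : is_lim_seq (fun n => K * (/ q) ^ n) 0).
  { replace (Finite 0) with (Rbar_mult K 0) by (simpl; f_equal; ring).
    apply is_lim_seq_scal_l, is_lim_seq_geom.
    rewrite Rabs_inv, Rabs_pos_eq by lra.
    rewrite <- Rinv_1. apply Rinv_lt_contravar; lra. }
  apply is_lim_seq_abs_0, (is_lim_seq_le_le (fun _ => 0) _ (fun n => K * (/ q) ^ n));
    [| apply is_lim_seq_const | exact Hgeom].
  intro n. assert (Hqn : 0 < q ^ n) by (apply pow_lt; lra).
  split; [apply Rabs_pos |].
  rewrite pow_inv, Rabs_div, (Rabs_pos_eq (q ^ n)) by lra.
  apply Rmult_le_compat_r; [left; apply Rinv_0_lt_compat |]; auto.
Qed.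

Section Telescoping.
Variables (q C L : R) (g h : nat -> R).
Hypothesis (Hq : 1 < q).
Hypothesis (Hg : forall n, Rabs (g (S n) - q * g n) <= C).
Hypothesis (Hh : forall n, Rabs (h n - g n) <= L).

Let e := C / (q - 1).
Let lower n := (g n - e) / q ^ n.
Let upper n := (g n + e) / q ^ n.

Lemma telescoping_lower_incr n : lower n <= lower (S n).
Proof.
  assert (Hqn : 0 < q ^ n) by (apply pow_lt; lra).
  assert (E : lower (S n) - lower n = (g (S n) - q * g n + C) / q ^ S n).
  { unfold lower, e. simpl. field. lra. }
  assert (0 <= (g (S n) - q * g n + C) / q ^ S n).
  { apply Rdiv_le_0_compat; [| apply pow_lt; lra].
    pose proof (proj1 (Rabs_le_between _ _) (Hg n)). lra. }
  lra.
Qed.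

Lemma telescoping_upper_decr n : upper (S n) <= upper n.
Proof.
  assert (Hqn : 0 < q ^ n) by (apply pow_lt; lra).
  assert (E : upper n - upper (S n) = (C - (g (S n) - q * g n)) / q ^ S n).
  { unfold upper, e. simpl. field. lra. }
  assert (0 <= (C - (g (S n) - q * g n)) / q ^ S n).
  { apply Rdiv_le_0_compat; [| apply pow_lt; lra].
    pose proof (proj1 (Rabs_le_between _ _) (Hg n)). lra. }
  lra.
Qed.

Lemma telescoping_lower_le_upper n : lower n <= upper n.
Proof.
  assert (Hqn : 0 < q ^ n) by (apply pow_lt; lra).
  assert (HC : 0 <= C) by (eapply Rle_trans; [apply Rabs_pos | apply (Hg 0%nat)]).
  assert (0 <= e) by (apply Rdiv_le_0_compat; lra).
  unfold lower, upper. apply Rmult_le_compat_r; [left; apply Rinv_0_lt_compat |]; lra.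
Qed.

Lemma tate_telescoping :
  exists l : R, is_lim_seq (fun n => h n / q ^ n) l /\ Rabs (l - g 0%nat) <= C / (q - 1).
Proof.
  assert (Hlower : forall n, lower 0 <= lower n).
  { induction n; [lra | pose proof (telescoping_lower_incr n); lra]. }
  assert (Hupper : forall n, upper n <= upper 0).
  { induction n; [lra | pose proof (telescoping_upper_decr n); lra]. }
  assert (Hbounded : forall n, lower n <= upper 0).
  { intro n. pose proof (telescoping_lower_le_upper n). pose proof (Hupper n). lra. }
  destruct (growing_cv lower) as [l Hl].
  - exact telescoping_lower_incr.
  - exists (upper 0%nat). intros y [n ->]. apply Hbounded.
  - apply is_lim_seq_Reals in Hl.
    exists l. split.
    + assert (Hrest : is_lim_seq (fun n => (h n - g n + e) / q ^ n) 0).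
      { apply (is_lim_seq_bounded_div_pow _ (L + Rabs e)); auto. intro n.
        eapply Rle_trans; [apply Rabs_triang | apply Rplus_le_compat_r, Hh]. }
      replace (Finite l) with (Rbar_plus l 0) by (simpl; f_equal; ring).
      eapply is_lim_seq_ext; [| apply (is_lim_seq_plus' _ _ _ _ Hl Hrest)].
      intro n. unfold lower. field. apply pow_nonzero. lra.
    + pose proof (is_lim_seq_le (fun _ => lower 0%nat) lower _ l Hlower (is_lim_seq_const _) Hl).
      pose proof (is_lim_seq_le lower (fun _ => upper 0%nat) l _ Hbounded Hl (is_lim_seq_const _)).
      unfold lower, upper, e in *. simpl in *. rewrite !Rdiv_1_r in *.
      apply Rabs_le. lra.
Qed.

End Telescoping.

Definition height_frac (p q : Z) : R :=
  ln (IZR (Z.max (Z.abs p) (Z.abs q)) / IZR (Z.gcd p q)).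

Lemma IZR_max (a b : Z) : IZR (Z.max a b) = Rmax (IZR a) (IZR b).
Proof.
  destruct (Z.max_spec a b) as [[H ->] | [H ->]];
    [rewrite Rmax_right | rewrite Rmax_left]; auto; apply IZR_le; lia.
Qed.

Lemma height_frac_opp (p q : Z) : height_frac (- p) (- q) = height_frac p q.
Proof. unfold height_frac. now rewrite !Z.abs_opp, Z.gcd_opp_l, Z.gcd_opp_r. Qed.

Lemma height_frac_coprime (p q : Z) :
  Z.gcd p q = 1%Z -> height_frac p q = ln (IZR (Z.max (Z.abs p) (Z.abs q))).
Proof. intro H. unfold height_frac. rewrite H, Rdiv_1_r. reflexivity. Qed.

Lemma heightQ_frac (p : Z) (q : positive) : heightQ (p # q) = height_frac p (Zpos q).
Proof.
  unfold heightQ, Qred, height_frac.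
  pose proof (Z.ggcd_correct_divisors p (Zpos q)) as Hdiv.
  pose proof (Z.ggcd_gcd p (Zpos q)) as Hgcd.
  destruct (Z.ggcd p (Zpos q)) as [g [p' q']]. simpl in Hgcd |- *. destruct Hdiv as [Hp Hq].
  assert (Hg : (0 < g)%Z).
  { pose proof (Z.gcd_nonneg p (Zpos q)). assert (g <> 0%Z) by (intro; subst; lia). lia. }
  rewrite <- Hgcd, Z2Pos.id by lia. rewrite Hq, Hp, !Z.abs_mul, (Z.abs_eq g) by lia.
  rewrite Z.mul_max_distr_nonneg_l, mult_IZR, IZR_max by lia.
  f_equal. field. apply not_0_IZR. lia.
Qed.

Lemma heightQ_Q2R (x : Q) (p q : Z) :
  q <> 0%Z -> Q2R x = IZR p / IZR q -> heightQ x = height_frac p q.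
Proof.
  intros Hq Hx.
  assert (Hpos : forall p q, (0 < q)%Z -> Q2R x = IZR p / IZR q -> heightQ x = height_frac p q).
  { clear p q Hq Hx. intros p q Hq Hx.
    assert (E : x == p # Z.to_pos q).
    { apply eqR_Qeq. rewrite Hx. unfold Q2R. simpl. rewrite Z2Pos.id by lia. reflexivity. }
    unfold heightQ. rewrite (Qred_complete _ _ E).
    fold (heightQ (p # Z.to_pos q)). rewrite heightQ_frac, Z2Pos.id by lia. reflexivity. }
  destruct (Z_lt_le_dec 0 q).
  - auto.
  - rewrite <- height_frac_opp. apply Hpos; [lia |].
    rewrite Hx, !opp_IZR. field. apply not_0_IZR. lia.
Qed.

Lemma Qred_coprime (x : Q) : Z.gcd (Qnum (Qred x)) (QDen (Qred x)) = 1%Z.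
Proof. apply Qred_identity2, Qred_involutive. Qed.

Lemma Q2R_Qred (x : Q) : Q2R x = IZR (Qnum (Qred x)) / IZR (QDen (Qred x)).
Proof. rewrite <- (Qeq_eqR _ _ (Qred_correct x)). reflexivity. Qed.

Lemma heightQ_Qred (x : Q) : heightQ x = height_frac (Qnum (Qred x)) (QDen (Qred x)).
Proof.
  rewrite height_frac_coprime by apply Qred_coprime.
  unfold heightQ. rewrite IZR_max. reflexivity.
Qed.

Lemma ln_div_near (S T g K : R) :
  0 < S -> 0 < T -> 1 <= g -> g * T <= K * S -> S <= K * T ->
  Rabs (ln (S / g) - ln T) <= ln K.
Proof.
  intros HS HT Hg Hlow Hup.
  assert (HK : 0 < K) by nra.
  assert (HgT : 0 < g * T) by nra.
  replace (ln (S / g) - ln T) with (ln (S / (g * T))).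
  2:{ rewrite !ln_div, ln_mult by lra. ring. }
  apply Rabs_le. split.
  - rewrite <- ln_Rinv by lra. apply ln_le; [apply Rinv_0_lt_compat; lra |].
    apply (Rmult_le_reg_r (K * (g * T))); [nra |].
    field_simplify; lra.
  - apply ln_le; [apply Rdiv_lt_0_compat; lra |].
    apply (Rmult_le_reg_r (g * T)); [lra |].
    field_simplify; nra.
Qed.

Lemma height_frac_near (p q T K : Z) :
  q <> 0%Z -> (0 < T)%Z ->
  (Z.gcd p q * T <= K * Z.max (Z.abs p) (Z.abs q))%Z ->
  (Z.max (Z.abs p) (Z.abs q) <= K * T)%Z ->
  Rabs (height_frac p q - ln (IZR T)) <= ln (IZR K).
Proof.
  intros Hq HT Hlow Hup.
  assert (Hg : (1 <= Z.gcd p q)%Z).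
  { pose proof (Z.gcd_nonneg p q). assert (Z.gcd p q <> 0%Z) by (rewrite Z.gcd_eq_0; lia). lia. }
  apply ln_div_near; rewrite <- ?mult_IZR; (apply IZR_lt || apply IZR_le); lia.
Qed.

Lemma gcd_mul_coprime_divides (D m n : Z) :
  (0 <= D)%Z -> Z.gcd m n = 1%Z -> (Z.gcd (D * m) n | D)%Z.
Proof.
  intros HD Hmn.
  rewrite <- (Z.mul_1_r D) at 2. rewrite <- Hmn, <- Z.gcd_mul_mono_l_nonneg by lia.
  apply Z.gcd_greatest; [apply Z.gcd_divide_l |].
  apply Z.divide_mul_r, Z.gcd_divide_r.
Qed.

Lemma height_frac_scale (D m n : Z) :
  (0 < D)%Z -> (0 < n)%Z -> Z.gcd m n = 1%Z ->
  Rabs (height_frac (D * m) n - height_frac m n) <= ln (IZR D)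
  /\ ((n < m)%Z -> height_frac m n <= height_frac (D * m) n).
Proof.
  intros HD Hn Hmn.
  assert (Hg : (1 <= Z.gcd (D * m) n <= D)%Z).
  { pose proof (Z.gcd_nonneg (D * m) n).
    assert (Z.gcd (D * m) n <> 0%Z) by (rewrite Z.gcd_eq_0; lia).
    pose proof (Z.divide_pos_le _ _ HD (gcd_mul_coprime_divides D m n ltac:(lia) Hmn)). lia. }
  rewrite (height_frac_coprime m n Hmn). split.
  - apply height_frac_near; rewrite ?Z.abs_mul, ?(Z.abs_eq D), ?(Z.abs_eq n) by lia; nia.
  - intro Hnm. unfold height_frac.
    rewrite !Z.abs_mul, !Z.abs_eq, !Z.max_l by nia.
    apply ln_le; [apply IZR_lt; lia |].
    rewrite mult_IZR. apply (Rmult_le_reg_r (IZR (Z.gcd (D * m) n))); [apply IZR_lt; lia |].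
    field_simplify; [| apply not_0_IZR; lia].
    rewrite <- !mult_IZR. apply IZR_le. nia.
Qed.

Lemma Q2R_inject_Z (z : Z) : Q2R (inject_Z z) = IZR z.
Proof. unfold Q2R, inject_Z. simpl. field. Qed.

Lemma Q2R_div_inject_Z (x : Q) (D : Z) :
  D <> 0%Z -> Q2R (x / inject_Z D) = Q2R x / IZR D.
Proof.
  intro HD. rewrite Q2R_div, Q2R_inject_Z; [reflexivity |].
  intro E. apply HD, eq_IZR. rewrite <- Q2R_inject_Z, E. apply RMicromega.Q2R_0.
Qed.

Lemma Q2R_scaled_Qred (x : Q) (D : Z) :
  D <> 0%Z ->
  Q2R x = IZR (D * Qnum (Qred (x / inject_Z D))) / IZR (QDen (Qred (x / inject_Z D))).
Proof.
  intros HD. set (u := Qred (x / inject_Z D)).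
  assert (Hu : Q2R (x / inject_Z D) = IZR (Qnum u) / IZR (QDen u)) by apply Q2R_Qred.
  rewrite Q2R_div_inject_Z in Hu by exact HD.
  rewrite mult_IZR. replace (Q2R x) with (Q2R x / IZR D * IZR D).
  - rewrite Hu. field. apply not_0_IZR. discriminate.
  - field. apply not_0_IZR, HD.
Qed.

Lemma heightQ_div_bound (x : Q) (D : Z) :
  (0 < D)%Z ->
  Rabs (heightQ x - heightQ (x / inject_Z D)) <= ln (IZR D)
  /\ ((inject_Z D < x)%Q -> heightQ (x / inject_Z D) <= heightQ x).
Proof.
  intro HD.
  pose proof (Q2R_scaled_Qred x D ltac:(lia)) as Hx.
  rewrite (heightQ_Qred (x / inject_Z D)). set (u := Qred (x / inject_Z D)) in *.
  rewrite (heightQ_Q2R x (D * Qnum u) (QDen u)); [| discriminate | exact Hx].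
  destruct (height_frac_scale D (Qnum u) (QDen u) HD ltac:(lia) (Qred_coprime _))
    as [Hnear Hgt].
  split; [exact Hnear |].
  intro HxD. apply Hgt.
  apply Qlt_Rlt in HxD. rewrite Q2R_inject_Z, Hx, mult_IZR in HxD.
  apply lt_IZR. apply (Rmult_lt_reg_l (IZR D)); [apply IZR_lt; lia |].
  assert (0 < IZR (QDen u)) by (apply IZR_lt; lia).
  apply (Rmult_lt_compat_r (IZR (QDen u))) in HxD; [| lra].
  field_simplify in HxD; lra.
Qed.

Section BinaryForms.
Open Scope Z_scope.

(* [hform [c_0; ...; c_d] m n] is the binary form sum_i c_i m^(d-i) n^i. *)
Fixpoint hform (cs : list Z) (m n : Z) : Z :=
  match cs with
  | [] => 0
  | c :: cs' => c * m ^ Z.of_nat (length cs') + n * hform cs' m n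
  end.

Definition coeff_norm (cs : list Z) : Z := fold_right (fun c s => Z.abs c + s) 0 cs.

Lemma coeff_norm_nonneg (cs : list Z) : 0 <= coeff_norm cs.
Proof. induction cs; simpl; lia. Qed.

Lemma hform_bound_pred (cs : list Z) (m n T : Z) :
  Z.abs m <= T -> Z.abs n <= T ->
  Z.abs (hform cs m n) <= coeff_norm cs * T ^ Z.of_nat (length cs - 1).
Proof.
  intros Hm Hn.
  induction cs as [| c cs IH]; [simpl; lia |].
  cbn [hform length coeff_norm fold_right]. rewrite Nat.sub_succ, Nat.sub_0_r.
  fold (coeff_norm cs) in *.
  assert (Hlead : Z.abs (c * m ^ Z.of_nat (length cs)) <= Z.abs c * T ^ Z.of_nat (length cs)).
  { rewrite Z.abs_mul, Z.abs_pow. apply Z.mul_le_mono_nonneg_l; [lia |].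
    apply Z.pow_le_mono_l. lia. }
  destruct cs as [| c' cs]; [simpl in *; lia |].
  cbn [length] in *. rewrite Nat.sub_succ, Nat.sub_0_r in IH.
  assert (Htail : Z.abs (n * hform (c' :: cs) m n)
                  <= coeff_norm (c' :: cs) * T ^ Z.of_nat (S (length cs))).
  { rewrite Nat2Z.inj_succ, Z.pow_succ_r, Z.abs_mul by lia.
    apply Z.le_trans with (T * (coeff_norm (c' :: cs) * T ^ Z.of_nat (length cs))).
    - apply Z.mul_le_mono_nonneg; auto; lia.
    - apply Z.eq_le_incl. ring. }
  eapply Z.le_trans; [apply Z.abs_triangle |].
  rewrite Z.mul_add_distr_r. apply Z.add_le_mono; assumption.
Qed.

Lemma hform_bound (cs : list Z) (d : nat) (m n T : Z) :
  length cs = S d -> Z.abs m <= T -> Z.abs n <= T ->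
  Z.abs (hform cs m n) <= coeff_norm cs * T ^ Z.of_nat d.
Proof.
  intros Hd Hm Hn. pose proof (hform_bound_pred cs m n T Hm Hn) as H.
  rewrite Hd, Nat.sub_succ, Nat.sub_0_r in H. exact H.
Qed.

Lemma abs_lincomb_le (a b c d : Z) :
  Z.abs (a * b + c * d) <= (Z.abs a + Z.abs c) * Z.max (Z.abs b) (Z.abs d).
Proof.
  eapply Z.le_trans; [apply Z.abs_triangle |].
  rewrite !Z.abs_mul, Z.mul_add_distr_r.
  apply Z.add_le_mono; apply Z.mul_le_mono_nonneg_l; lia.
Qed.

Lemma hform_lincomb_bound (c1 c2 : list Z) (d : nat) (m n T F G : Z) :
  length c1 = S d -> length c2 = S d -> Z.abs m <= T -> Z.abs n <= T ->
  Z.abs (hform c1 m n * F + hform c2 m n * G)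
  <= (coeff_norm c1 + coeff_norm c2) * T ^ Z.of_nat d * Z.max (Z.abs F) (Z.abs G).
Proof.
  intros Hc1 Hc2 Hm Hn.
  eapply Z.le_trans; [apply abs_lincomb_le |].
  apply Z.mul_le_mono_nonneg_r; [lia |].
  pose proof (hform_bound c1 d m n T Hc1 Hm Hn).
  pose proof (hform_bound c2 d m n T Hc2 Hm Hn).
  lia.
Qed.

End BinaryForms.

Ltac expand_hform := cbn [hform length Z.of_nat Pos.of_succ_nat Pos.succ].

Section Duplication.
Open Scope Z_scope.
Variables A B : Z.

(* On y^2 = x^3 + A x + B: y^2 = weierstrass_form x 1 and x(2P) = dbl_num x 1 / dbl_den x 1. *)
Definition weierstrass_form : Z -> Z -> Z := hform [1; 0; A; B].
Definition dbl_num : Z -> Z -> Z := hform [1; 0; -2 * A; -8 * B; A * A].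
Definition dbl_den : Z -> Z -> Z := hform [0; 4; 0; 4 * A; 4 * B].
Definition dbl_disc : Z := 4 * (4 * A ^ 3 + 27 * B ^ 2).

Let cofactor_n1 := [0; 12; 0; 16 * A].
Let cofactor_n2 := [-3; 0; 5 * A; 27 * B].
Let cofactor_m1 := [4 * (4 * A ^ 3 + 27 * B ^ 2); -4 * A ^ 2 * B;
                    4 * A * (3 * A ^ 3 + 22 * B ^ 2); 12 * B * (A ^ 3 + 8 * B ^ 2)].
Let cofactor_m2 := [A ^ 2 * B; A * (5 * A ^ 3 + 32 * B ^ 2);
                    2 * B * (13 * A ^ 3 + 96 * B ^ 2); -3 * A ^ 2 * (A ^ 3 + 8 * B ^ 2)].

Lemma dbl_den_weierstrass m n : dbl_den m n = 4 * n * weierstrass_form m n.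
Proof. unfold dbl_den, weierstrass_form. expand_hform. ring. Qed.

Lemma dbl_resultant_n m n :
  hform cofactor_n1 m n * dbl_num m n + hform cofactor_n2 m n * dbl_den m n
  = dbl_disc * n ^ 7.
Proof. unfold cofactor_n1, cofactor_n2, dbl_num, dbl_den, dbl_disc. expand_hform. ring. Qed.

Lemma dbl_resultant_m m n :
  hform cofactor_m1 m n * dbl_num m n + hform cofactor_m2 m n * dbl_den m n
  = dbl_disc * m ^ 7.
Proof. unfold cofactor_m1, cofactor_m2, dbl_num, dbl_den, dbl_disc. expand_hform. ring. Qed.

Lemma dbl_gcd_divides_disc m n :
  Z.gcd m n = 1 -> (Z.gcd (dbl_num m n) (dbl_den m n) | dbl_disc).
Proof.
  intro Hmn. set (g := Z.gcd (dbl_num m n) (dbl_den m n)).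
  assert (HF : (g | dbl_num m n)) by apply Z.gcd_divide_l.
  assert (HG : (g | dbl_den m n)) by apply Z.gcd_divide_r.
  assert (Hn7 : (g | dbl_disc * n ^ 7)).
  { rewrite <- (dbl_resultant_n m n). apply Z.divide_add_r; apply Z.divide_mul_r; auto. }
  assert (Hm7 : (g | dbl_disc * m ^ 7)).
  { rewrite <- (dbl_resultant_m m n). apply Z.divide_add_r; apply Z.divide_mul_r; auto. }
  assert (H17 : Z.gcd (n ^ 7) (m ^ 7) = 1).
  { apply Zgcd_1_rel_prime, rel_prime_Zpower; try lia.
    apply rel_prime_sym, Zgcd_1_rel_prime, Hmn. }
  apply Z.divide_abs_r. rewrite <- (Z.mul_1_r (Z.abs dbl_disc)), <- H17, <- Z.gcd_mul_mono_l.
  apply Z.gcd_greatest; assumption.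
Qed.

Lemma dbl_upper_bound : exists K, 0 <= K /\ forall m n,
  Z.max (Z.abs (dbl_num m n)) (Z.abs (dbl_den m n)) <= K * Z.max (Z.abs m) (Z.abs n) ^ 4.
Proof.
  pose proof (coeff_norm_nonneg [1; 0; -2 * A; -8 * B; A * A]).
  pose proof (coeff_norm_nonneg [0; 4; 0; 4 * A; 4 * B]).
  exists (coeff_norm [1; 0; -2 * A; -8 * B; A * A] + coeff_norm [0; 4; 0; 4 * A; 4 * B]).
  split; [lia |]. intros m n. set (T := Z.max (Z.abs m) (Z.abs n)).
  pose proof (hform_bound [1; 0; -2 * A; -8 * B; A * A] 4 m n T eq_refl ltac:(lia) ltac:(lia))
    as HF.
  pose proof (hform_bound [0; 4; 0; 4 * A; 4 * B] 4 m n T eq_refl ltac:(lia) ltac:(lia)) as HG.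
  assert (0 <= T ^ 4) by (apply Z.pow_nonneg; lia).
  change (Z.of_nat 4) with 4 in HF, HG. unfold dbl_num, dbl_den. lia.
Qed.

Lemma dbl_lower_bound : exists K, 0 <= K /\ forall m n,
  Z.abs dbl_disc * Z.max (Z.abs m) (Z.abs n) ^ 4
  <= K * Z.max (Z.abs (dbl_num m n)) (Z.abs (dbl_den m n)).
Proof.
  pose proof (coeff_norm_nonneg cofactor_n1); pose proof (coeff_norm_nonneg cofactor_n2).
  pose proof (coeff_norm_nonneg cofactor_m1); pose proof (coeff_norm_nonneg cofactor_m2).
  set (K := coeff_norm cofactor_n1 + coeff_norm cofactor_n2
            + coeff_norm cofactor_m1 + coeff_norm cofactor_m2).
  exists K. split; [unfold K; lia |]. intros m n.
  set (T := Z.max (Z.abs m) (Z.abs n)).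
  set (Mx := Z.max (Z.abs (dbl_num m n)) (Z.abs (dbl_den m n))).
  assert (HMx : 0 <= Mx) by lia.
  assert (Hcomb : forall c1 c2 r, length c1 = S 3 -> length c2 = S 3 ->
            hform c1 m n * dbl_num m n + hform c2 m n * dbl_den m n = dbl_disc * r ->
            coeff_norm c1 + coeff_norm c2 <= K ->
            Z.abs (dbl_disc * r) <= K * (T ^ 3 * Mx)).
  { intros c1 c2 r Hc1 Hc2 Hr HK. rewrite <- Hr.
    eapply Z.le_trans; [apply (hform_lincomb_bound c1 c2 3 m n T); auto; lia |].
    rewrite <- Z.mul_assoc. apply Z.mul_le_mono_nonneg_r; [| exact HK].
    apply Z.mul_nonneg_nonneg; [apply Z.pow_nonneg |]; lia. }
  assert (H7 : Z.abs dbl_disc * T ^ 7 <= K * (T ^ 3 * Mx)).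
  { assert (HT : T = Z.abs n \/ T = Z.abs m) by lia.
    destruct HT as [HT | HT]; rewrite HT at 1; rewrite <- Z.abs_pow, <- Z.abs_mul.
    - apply (Hcomb cofactor_n1 cofactor_n2); [reflexivity | reflexivity |
        apply dbl_resultant_n | unfold K; lia].
    - apply (Hcomb cofactor_m1 cofactor_m2); [reflexivity | reflexivity |
        apply dbl_resultant_m | unfold K; lia]. }
  destruct (Z.eq_dec T 0) as [HT0 | HT0].
  - rewrite HT0, Z.pow_0_l, Z.mul_0_r by lia. apply Z.mul_nonneg_nonneg; lia.
  - apply (Z.mul_le_mono_pos_l _ _ (T ^ 3)); [apply Z.pow_pos_nonneg; lia |].
    replace (T ^ 3 * (Z.abs dbl_disc * T ^ 4)) with (Z.abs dbl_disc * T ^ 7) by ring.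
    replace (T ^ 3 * (K * Mx)) with (K * (T ^ 3 * Mx)) by ring.
    exact H7.
Qed.

Lemma weierstrass_root_bound m n :
  0 < n -> Z.gcd m n = 1 -> weierstrass_form m n = 0 ->
  Z.max (Z.abs m) (Z.abs n) <= 1 + Z.abs A + Z.abs B.
Proof.
  intros Hn Hmn. unfold weierstrass_form. expand_hform. intro Hroot.
  assert (Hn1 : n = 1).
  { assert (Hdiv : (n | m ^ 3)) by (exists (- (A * m * n + B * n * n)); lia).
    assert (Hcop : rel_prime n (m ^ 3)).
    { apply rel_prime_Zpower_r; [lia |]. apply rel_prime_sym, Zgcd_1_rel_prime, Hmn. }
    apply Z.divide_1_r_nonneg; [lia |].
    rewrite <- (proj2 (Zgcd_1_rel_prime _ _) Hcop).
    apply Z.gcd_greatest; [apply Z.divide_refl | exact Hdiv]. }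
  subst n.
  destruct (Z_le_gt_dec (Z.abs m) 1); [lia |].
  assert (m * m * Z.abs m <= Z.abs A * Z.abs m + Z.abs B) by nia.
  nia.
Qed.

End Duplication.

Lemma dbl_height_bound (A B : Z) :
  dbl_disc A B <> 0%Z ->
  exists C, forall m n, (0 < n)%Z -> Z.gcd m n = 1%Z -> dbl_den A B m n <> 0%Z ->
    Rabs (height_frac (dbl_num A B m n) (dbl_den A B m n)
          - 4 * ln (IZR (Z.max (Z.abs m) (Z.abs n)))) <= C.
Proof.
  intro Hdisc.
  destruct (dbl_lower_bound A B) as [K1 [HK1 Hlow]].
  destruct (dbl_upper_bound A B) as [K2 [HK2 Hup]].
  exists (ln (IZR (K1 + K2))). intros m n Hn Hmn Hden.
  set (T := Z.max (Z.abs m) (Z.abs n)).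
  assert (HT : (0 < T)%Z) by lia.
  assert (Hg : (Z.gcd (dbl_num A B m n) (dbl_den A B m n) <= Z.abs (dbl_disc A B))%Z).
  { apply Z.divide_pos_le; [lia |]. apply Z.divide_abs_r, dbl_gcd_divides_disc, Hmn. }
  replace (4 * ln (IZR T)) with (ln (IZR (T ^ 4))).
  2:{ change (T ^ 4)%Z with (T ^ Z.of_nat 4)%Z. rewrite <- pow_IZR, ln_pow.
      - simpl. ring.
      - apply IZR_lt. lia. }
  apply height_frac_near; auto.
  - apply Z.pow_pos_nonneg; lia.
  - specialize (Hlow m n). fold T in Hlow. nia.
  - specialize (Hup m n). fold T in Hup. assert (0 <= T ^ 4)%Z by (apply Z.pow_nonneg; lia). nia.
Qed.

Ltac push_IZR_hform :=
  cbn [hform length]; repeat rewrite ?plus_IZR, ?mult_IZR, <- ?pow_IZR.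

Section ScaledForms.
Variables (A B D m n : Z) (X : R).
Hypothesis (Hn : IZR n <> 0).
Hypothesis (HX : X = IZR D * IZR m / IZR n).

Lemma weierstrass_form_scaled :
  X * X * X + IZR D ^ 2 * IZR A * X + IZR D ^ 3 * IZR B
  = IZR D ^ 3 / IZR n ^ 3 * IZR (weierstrass_form A B m n).
Proof. unfold weierstrass_form. push_IZR_hform. subst X. field. exact Hn. Qed.

Lemma dbl_num_scaled :
  let a := IZR D ^ 2 * IZR A in
  let b := IZR D ^ 3 * IZR B in
  X ^ 4 - 2 * a * X ^ 2 - 8 * b * X + a ^ 2 = IZR D ^ 4 / IZR n ^ 4 * IZR (dbl_num A B m n).
Proof. unfold dbl_num. push_IZR_hform. subst X. simpl. field. exact Hn. Qed.

End ScaledForms.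

Lemma dbl_x_formula (a b X Y : R) :
  Y <> 0 -> Y * Y = X * X * X + a * X + b ->
  let l := (3 * X * X + a) / (2 * Y) in
  l * l - 2 * X = (X ^ 4 - 2 * a * X ^ 2 - 8 * b * X + a ^ 2) / (4 * (Y * Y)).
Proof.
  intros HY Hcurve l.
  replace (X ^ 4 - 2 * a * X ^ 2 - 8 * b * X + a ^ 2)
    with ((3 * X * X + a) ^ 2 - 8 * X * (Y * Y)) by (rewrite Hcurve; ring).
  unfold l. field. exact HY.
Qed.

Lemma tangent_point_on_curve (a b X Y : R) :
  Y <> 0 -> Y * Y = X * X * X + a * X + b ->
  let l := (3 * X * X + a) / (2 * Y) in
  let X' := l * l - 2 * X in
  (l * (X - X') - Y) * (l * (X - X') - Y) = X' * X' * X' + a * X' + b.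
Proof.
  intros HY Hcurve l X'.
  assert (Ha : a = 2 * l * Y - 3 * X * X) by (unfold l; field; exact HY).
  assert (Hb : b = Y * Y - X * X * X - a * X) by lra.
  unfold X'. rewrite Hb, Ha. ring.
Qed.

Lemma Q2R_Zpos_1 (p : positive) : Q2R (Zpos p # 1) = IZR (Zpos p).
Proof. unfold Q2R. simpl. field. Qed.

Lemma Qtwice_neq_0 (y : Q) : Qeq_bool y 0 = false -> ~ (2 # 1) * y == 0.
Proof.
  intros Hy E. apply (Qeq_bool_neq _ _ Hy), (Qmult_integral_l (2 # 1)); [discriminate | exact E].
Qed.

Ltac push_Q2R :=
  repeat first [ rewrite Q2R_plus | rewrite Q2R_minus | rewrite Q2R_mult
               | rewrite Q2R_div by (apply Qtwice_neq_0; assumption) | rewrite Q2R_Zpos_1 ].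

Lemma dbl_on_curve (a b : Q) (P : pt) : on_curve a b P -> on_curve a b (dbl a P).
Proof.
  destruct P as [[x y] |]; [| trivial]. intro Hcurve. unfold dbl.
  destruct (Qeq_bool y 0) eqn:Hy; [exact I |].
  apply Qeq_eqR in Hcurve. rewrite !Q2R_plus, !Q2R_mult in Hcurve.
  cbn beta iota zeta. apply eqR_Qeq. push_Q2R.
  apply tangent_point_on_curve; [| exact Hcurve].
  rewrite <- RMicromega.Q2R_0. apply RMicromega.Qeq_false, Hy.
Qed.

Lemma Q2R_inject_Z_pow_mul (D c : Z) (k : nat) :
  Q2R (inject_Z (D ^ Z.of_nat k * c)) = IZR D ^ k * IZR c.
Proof. rewrite Q2R_inject_Z, mult_IZR, pow_IZR. reflexivity. Qed.

Lemma on_curve_twist_Q2R (A B D : Z) (x y : Q) :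
  on_curve (inject_Z (D ^ 2 * A)) (inject_Z (D ^ 3 * B)) (Some (x, y)) ->
  Q2R y * Q2R y = Q2R x * Q2R x * Q2R x + IZR D ^ 2 * IZR A * Q2R x + IZR D ^ 3 * IZR B.
Proof.
  intro Hcurve. apply Qeq_eqR in Hcurve. rewrite !Q2R_plus, !Q2R_mult in Hcurve.
  change (D ^ 2)%Z with (D ^ Z.of_nat 2)%Z in Hcurve.
  change (D ^ 3)%Z with (D ^ Z.of_nat 3)%Z in Hcurve.
  rewrite !Q2R_inject_Z_pow_mul in Hcurve. exact Hcurve.
Qed.

Definition hpt_scaled (D : Z) (P : pt) : R :=
  match P with
  | None => 0
  | Some (x, _) => heightQ (x / inject_Z D)
  end.

Section TwistDoubling.
Variables (A B D m n : Z) (x y : Q).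
Hypothesis (HD : D <> 0%Z).
Hypothesis (Hn : n <> 0%Z).
Hypothesis (Hcurve : on_curve (inject_Z (D ^ 2 * A)) (inject_Z (D ^ 3 * B)) (Some (x, y))).
Hypothesis (Hx : Q2R x = IZR D * IZR m / IZR n).

Let HDR : IZR D <> 0 := not_0_IZR D HD.
Let HnR : IZR n <> 0 := not_0_IZR n Hn.

Lemma weierstrass_form_twist :
  IZR (weierstrass_form A B m n) = IZR n ^ 3 / IZR D ^ 3 * (Q2R y * Q2R y).
Proof.
  rewrite (on_curve_twist_Q2R A B D x y Hcurve), (weierstrass_form_scaled A B D m n _ HnR Hx).
  field. split; assumption.
Qed.

Lemma weierstrass_form_two_torsion : Qeq_bool y 0 = true -> weierstrass_form A B m n = 0%Z.
Proof.
  intro Hy. apply Qeq_bool_eq, Qeq_eqR in Hy. apply eq_IZR.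
  rewrite weierstrass_form_twist, Hy, RMicromega.Q2R_0. ring.
Qed.

Lemma hpt_scaled_dbl_eq :
  Qeq_bool y 0 = false ->
  hpt_scaled D (dbl (inject_Z (D ^ 2 * A)) (Some (x, y)))
    = height_frac (dbl_num A B m n) (dbl_den A B m n)
  /\ dbl_den A B m n <> 0%Z.
Proof.
  intro Hy.
  assert (HyR : Q2R y <> 0).
  { rewrite <- RMicromega.Q2R_0. apply RMicromega.Qeq_false, Hy. }
  assert (Hden : IZR (dbl_den A B m n) = 4 * IZR n ^ 4 / IZR D ^ 3 * (Q2R y * Q2R y)).
  { rewrite dbl_den_weierstrass, !mult_IZR, weierstrass_form_twist. field. exact HDR. }
  assert (HdenZ : dbl_den A B m n <> 0%Z).
  { intro E. apply (f_equal IZR) in E. rewrite Hden in E.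
    assert (Hy2 : Q2R y * Q2R y = 0).
    { replace (Q2R y * Q2R y) with (IZR D ^ 3 / (4 * IZR n ^ 4) * 0) by (rewrite <- E; field; auto).
      ring. }
    apply Rmult_integral in Hy2 as [Hy2 | Hy2]; contradiction. }
  split; [| exact HdenZ].
  unfold dbl. rewrite Hy. cbn beta iota zeta. unfold hpt_scaled.
  apply (heightQ_Q2R _ _ _ HdenZ).
  rewrite Q2R_div_inject_Z by exact HD. push_Q2R.
  change (D ^ 2)%Z with (D ^ Z.of_nat 2)%Z.
  rewrite Q2R_inject_Z_pow_mul, (dbl_x_formula _ _ _ _ HyR (on_curve_twist_Q2R A B D x y Hcurve)).
  rewrite (dbl_num_scaled A B D m n (Q2R x) HnR Hx), Hden.
  field. repeat split; auto.
Qed.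

End TwistDoubling.

Lemma hpt_scaled_dbl_bound (A B : Z) :
  dbl_disc A B <> 0%Z ->
  exists C, forall (D : Z) (P : pt), (0 < D)%Z ->
    on_curve (inject_Z (D ^ 2 * A)) (inject_Z (D ^ 3 * B)) P ->
    Rabs (hpt_scaled D (dbl (inject_Z (D ^ 2 * A)) P) - 4 * hpt_scaled D P) <= C.
Proof.
  intro Hdisc. destruct (dbl_height_bound A B Hdisc) as [C HC].
  set (C_torsion := 4 * ln (IZR (1 + Z.abs A + Z.abs B))).
  assert (HC_torsion : 0 <= C_torsion).
  { assert (1 <= IZR (1 + Z.abs A + Z.abs B)) by (apply IZR_le; lia).
    assert (0 <= ln (IZR (1 + Z.abs A + Z.abs B))) by (rewrite <- ln_1; apply ln_le; lra).
    unfold C_torsion. lra. }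
  exists (Rmax C C_torsion). intros D [[x y] |] HD Hcurve.
  2:{ simpl. rewrite Rmult_0_r, Rminus_0_r, Rabs_R0.
      eapply Rle_trans; [exact HC_torsion | apply Rmax_r]. }
  pose proof (Q2R_scaled_Qred x D ltac:(lia)) as Hx. rewrite mult_IZR in Hx.
  set (u := Qred (x / inject_Z D)) in Hx.
  change (hpt_scaled D (Some (x, y))) with (heightQ (x / inject_Z D)).
  rewrite heightQ_Qred, height_frac_coprime by apply Qred_coprime. fold u.
  destruct (Qeq_bool y 0) eqn:Hy.
  - pose proof (weierstrass_form_two_torsion A B D (Qnum u) (QDen u) x y
                  ltac:(lia) ltac:(discriminate) Hcurve Hx Hy) as Hroot.
    pose proof (weierstrass_root_bound A B (Qnum u) (QDen u) ltac:(lia) (Qred_coprime _) Hroot)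
      as Hsmall.
    unfold dbl. rewrite Hy. cbn [hpt_scaled].
    set (T := IZR (Z.max (Z.abs (Qnum u)) (Z.abs (QDen u)))).
    assert (HT : 1 <= T) by (apply IZR_le; lia).
    assert (0 <= ln T) by (rewrite <- ln_1; apply ln_le; lra).
    assert (ln T <= ln (IZR (1 + Z.abs A + Z.abs B))) by (apply ln_le; [lra | apply IZR_le; lia]).
    eapply Rle_trans; [| apply Rmax_r]. unfold C_torsion. rewrite Rabs_left1; lra.
  - destruct (hpt_scaled_dbl_eq A B D (Qnum u) (QDen u) x y ltac:(lia) ltac:(discriminate)
                Hcurve Hx Hy) as [Hdbl Hden].
    rewrite Hdbl. eapply Rle_trans; [| apply Rmax_l].
    apply HC; [lia | apply Qred_coprime | exact Hden].
Qed.

Lemma hpt_scaled_near (D : Z) (P : pt) :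
  (0 < D)%Z -> Rabs (hpt P - hpt_scaled D P) <= ln (IZR D).
Proof.
  intro HD. destruct P as [[x y] |].
  - apply (heightQ_div_bound x D HD).
  - simpl. rewrite Rminus_0_r, Rabs_R0, <- ln_1.
    apply ln_le; [lra | apply IZR_le; lia].
Qed.

Theorem lemma3p3 (A B : Z) :
  (4 * A ^ 3 + 27 * B ^ 2 <> 0)%Z ->
  exists c1 c2 : R,
    forall (D : Z), (0 < D)%Z -> squarefree D ->
    forall P : pt,
      on_curve (inject_Z (D ^ 2 * A)) (inject_Z (D ^ 3 * B)) P ->
      P <> None ->
      let d := canon_height (inject_Z (D ^ 2 * A)) P - hpt P in
      (c1 - ln (IZR D) <= d <= c2 + ln (IZR D)) /\
      (x_coord_gt P D -> c1 - ln (IZR D) <= d <= c2).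
Proof.
  intro Hdisc.
  destruct (hpt_scaled_dbl_bound A B ltac:(unfold dbl_disc; lia)) as [C HC].
  exists (- (C / 3)), (C / 3).
  intros D HD _ P Hcurve HP d.
  set (a := inject_Z (D ^ 2 * A)) in *.
  set (orbit k := Nat.iter k (dbl a) P).
  assert (Horbit : forall k, on_curve a (inject_Z (D ^ 3 * B)) (orbit k)).
  { induction k; [exact Hcurve | apply dbl_on_curve, IHk]. }
  destruct (tate_telescoping 4 C (ln (IZR D)) (fun k => hpt_scaled D (orbit k))
              (fun k => hpt (orbit k)) ltac:(lra)) as [l [Hlim Hl]].
  - intro k. apply HC; [exact HD | apply Horbit].
  - intro k. apply hpt_scaled_near, HD.
  - unfold d, canon_height.
    rewrite (is_lim_seq_unique (fun n => hpt (Nat.iter n (dbl a) P) / 4 ^ n) l Hlim). simpl real.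
    replace (4 - 1) with 3 in Hl by ring.
    destruct P as [[x y] |]; [| contradiction].
    destruct (heightQ_div_bound x D HD) as [Hnear Hgt].
    change (hpt_scaled D (orbit 0%nat)) with (heightQ (x / inject_Z D)) in Hl.
    change (hpt (Some (x, y))) with (heightQ x).
    apply Rabs_le_between in Hl. apply Rabs_le_between in Hnear.
    split; [lra | intro Hx; specialize (Hgt Hx); lra].
Qed.
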